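(* Let $P$ be a set of $n$ points in the plane and let $\mathcal{D}'$ be a set of closed disks with pairwise disjoint interiors such that the boundary circle of each disk in $\mathcal{D}'$ contains at least two points of $P$. Then $|\mathcal{D}'|\le n$. Moreover, this bound is tight: for every $n\ge 3$ there exist a set $P$ of $n$ points and such a family $\mathcal{D}'$ with $|\mathcal{D}'|=n$. *)

From Stdlib Require Import Reals List.
Import ListNotations.
Open Scope R_scope.

Definition point : Type := (R * R)%type.

(* A closed disk, given by its center and radius (radius required > 0 below). *)
Definition disk : Type := (point * R)%type.

Definition sqdist (p q : point) : R :=
  (fst p - fst q) ^ 2 + (snd p - snd q) ^ 2.

Definition on_boundary (d : disk) (p : point) : Prop :=
  sqdist p (fst d) = (snd d) ^ 2.

Definition in_interior (d : disk) (p : point) : Prop :=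
  sqdist p (fst d) < (snd d) ^ 2.

Definition admissible_family (P : list point) (D : list disk) : Prop :=
  NoDup D /\
  (forall d, In d D ->
     0 < snd d /\
     exists p q, In p P /\ In q P /\ p <> q /\ on_boundary d p /\ on_boundary d q) /\
  (forall d1 d2, In d1 D -> In d2 D -> d1 <> d2 ->
     forall z, ~ (in_interior d1 z /\ in_interior d2 z)).

From Stdlib Require Import Reals List Lra Lia.
Import ListNotations.
Open Scope R_scope.

(* Two disks with disjoint interiors whose circles share a point p touch externally at p:
   p lies on the segment between the centres, cutting it in the ratio r1 : r2.  Three such
   disks through p would put the centre of one of them on p, so every point of P lies on at
   most two of the circles.  Counting incidences between P and the circles then gives
   2 |D| <= 2 |P|.  For tightness, two touching rows of unit disks are closed off on the
   right by a small disk touching both end disks, and on the left either by another such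
   disk or by the contact point of the two end disks; the contact points are the points of
   P, and there are as many of them as disks. *)

Definition point_eq_dec (p q : point) : {p = q} + {p <> q}.
Proof. decide equality; apply Req_EM_T. Defined.

Definition interiors_disjoint (d1 d2 : disk) : Prop :=
  forall z, ~ (in_interior d1 z /\ in_interior d2 z).

(* For [p] on both circles, [tangency_defect d1 d2 p = (0, 0)] says that [p] divides the
   segment between the centres in the ratio [r1 : r2], i.e. the disks touch externally at [p]. *)
Definition tangency_defect (d1 d2 : disk) (p : point) : point :=
  (snd d2 * (fst (fst d1) - fst p) + snd d1 * (fst (fst d2) - fst p),
   snd d2 * (snd (fst d1) - snd p) + snd d1 * (snd (fst d2) - snd p)).

Definition tangency_probe (d1 d2 : disk) (p : point) : point :=
  (fst p + fst (tangency_defect d1 d2 p) / (snd d1 + snd d2),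
   snd p + snd (tangency_defect d1 d2 p) / (snd d1 + snd d2)).

Lemma tangency_defect_comm (d1 d2 : disk) (p : point) :
  tangency_defect d2 d1 p = tangency_defect d1 d2 p.
Proof. unfold tangency_defect; f_equal; ring. Qed.

Lemma tangency_probe_comm (d1 d2 : disk) (p : point) :
  tangency_probe d2 d1 p = tangency_probe d1 d2 p.
Proof. unfold tangency_probe; rewrite tangency_defect_comm, (Rplus_comm (snd d2)); reflexivity. Qed.

Lemma tangency_probe_in_interior (d1 d2 : disk) (p : point) :
  0 < snd d1 -> 0 < snd d2 -> on_boundary d1 p -> on_boundary d2 p ->
  tangency_defect d1 d2 p <> (0, 0) -> in_interior d1 (tangency_probe d1 d2 p).
Proof.
  (* With [w] the defect and [k = r1 r2 + (c1 - p).(c2 - p)] we have [|w|^2 = 2 r1 r2 k], so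
     [w <> 0] forces [k > 0]; the probe lies at squared distance [r1^2 - 2 (r1/(r1+r2))^2 k]
     from [c1]. *)
  destruct d1 as [[x1 y1] r1], d2 as [[x2 y2] r2], p as [px py].
  unfold on_boundary, in_interior, sqdist, tangency_probe, tangency_defect; cbn [fst snd].
  intros r1_pos r2_pos on1 on2 defect_nz.
  set (wx := r2 * (x1 - px) + r1 * (x2 - px)) in *.
  set (wy := r2 * (y1 - py) + r1 * (y2 - py)) in *.
  set (k := r1 * r2 + (x1 - px) * (x2 - px) + (y1 - py) * (y2 - py)).
  assert (norm_w : wx ^ 2 + wy ^ 2 = 2 * r1 * r2 * k).
  { transitivity (r2 ^ 2 * ((px - x1) ^ 2 + (py - y1) ^ 2) + r1 ^ 2 * ((px - x2) ^ 2 + (py - y2) ^ 2)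
                  + 2 * r1 * r2 * ((x1 - px) * (x2 - px) + (y1 - py) * (y2 - py))).
    - unfold wx, wy; ring.
    - rewrite on1, on2; unfold k; ring. }
  assert (dot_w : wx * (x1 - px) + wy * (y1 - py) = r1 * k).
  { transitivity (r2 * ((px - x1) ^ 2 + (py - y1) ^ 2) + r1 * ((x1 - px) * (x2 - px) + (y1 - py) * (y2 - py))).
    - unfold wx, wy; ring.
    - rewrite on1; unfold k; ring. }
  assert (w_pos : 0 < wx ^ 2 + wy ^ 2).
  { destruct (Req_dec wx 0) as [wx0 | wx_nz].
    - destruct (Req_dec wy 0) as [wy0 | wy_nz].
      + contradiction defect_nz; rewrite wx0, wy0; reflexivity.
      + pose proof (Rlt_0_sqr wy wy_nz); pose proof (pow2_ge_0 wx); unfold Rsqr in *; nra.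
    - pose proof (Rlt_0_sqr wx wx_nz); pose proof (pow2_ge_0 wy); unfold Rsqr in *; nra. }
  assert (k_pos : 0 < k).
  { assert (0 < r1 * r2) by (apply Rmult_lt_0_compat; lra). nra. }
  replace ((px + wx / (r1 + r2) - x1) ^ 2 + (py + wy / (r1 + r2) - y1) ^ 2)
    with (r1 ^ 2 - 2 * (r1 / (r1 + r2)) ^ 2 * k).
  - assert (0 < (r1 / (r1 + r2)) ^ 2 * k).
    { apply Rmult_lt_0_compat; [apply pow_lt, Rdiv_lt_0_compat|]; lra. }
    lra.
  - transitivity ((wx ^ 2 + wy ^ 2) / (r1 + r2) ^ 2 - 2 * (wx * (x1 - px) + wy * (y1 - py)) / (r1 + r2)
                  + ((px - x1) ^ 2 + (py - y1) ^ 2)).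
    + rewrite norm_w, dot_w, on1. field. lra.
    + field. lra.
Qed.

Lemma tangent_of_interiors_disjoint (d1 d2 : disk) (p : point) :
  0 < snd d1 -> 0 < snd d2 -> on_boundary d1 p -> on_boundary d2 p ->
  interiors_disjoint d1 d2 -> tangency_defect d1 d2 p = (0, 0).
Proof.
  intros r1_pos r2_pos on1 on2 disj.
  destruct (point_eq_dec (tangency_defect d1 d2 p) (0, 0)) as [zero | nonzero]; [exact zero|].
  exfalso; apply (disj (tangency_probe d1 d2 p)); split.
  - now apply tangency_probe_in_interior.
  - rewrite <- tangency_probe_comm.
    apply tangency_probe_in_interior; try assumption.
    now rewrite tangency_defect_comm.
Qed.

Lemma no_three_disks_through_point (d1 d2 d3 : disk) (p : point) :
  0 < snd d1 -> 0 < snd d2 -> 0 < snd d3 ->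
  on_boundary d1 p -> on_boundary d2 p -> on_boundary d3 p ->
  interiors_disjoint d1 d2 -> interiors_disjoint d1 d3 -> interiors_disjoint d2 d3 -> False.
Proof.
  intros r1_pos r2_pos r3_pos on1 on2 on3 disj12 disj13 disj23.
  pose proof (tangent_of_interiors_disjoint d1 d2 p r1_pos r2_pos on1 on2 disj12) as t12.
  pose proof (tangent_of_interiors_disjoint d1 d3 p r1_pos r3_pos on1 on3 disj13) as t13.
  pose proof (tangent_of_interiors_disjoint d2 d3 p r2_pos r3_pos on2 on3 disj23) as t23.
  destruct d1 as [[x1 y1] r1], d2 as [[x2 y2] r2], d3 as [[x3 y3] r3], p as [px py].
  unfold tangency_defect, on_boundary, sqdist in *; cbn [fst snd] in *.
  injection t12 as tx12 ty12; injection t13 as tx13 ty13; injection t23 as tx23 ty23.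
  (* r3 t12 + r2 t13 - r1 t23 = 2 r2 r3 (c1 - p) *)
  assert (center_x : 2 * (r2 * r3) * (x1 - px) = 0).
  { transitivity (r3 * (r2 * (x1 - px) + r1 * (x2 - px)) + r2 * (r3 * (x1 - px) + r1 * (x3 - px))
                  - r1 * (r3 * (x2 - px) + r2 * (x3 - px))); [ring|].
    rewrite tx12, tx13, tx23; ring. }
  assert (center_y : 2 * (r2 * r3) * (y1 - py) = 0).
  { transitivity (r3 * (r2 * (y1 - py) + r1 * (y2 - py)) + r2 * (r3 * (y1 - py) + r1 * (y3 - py))
                  - r1 * (r3 * (y2 - py) + r2 * (y3 - py))); [ring|].
    rewrite ty12, ty13, ty23; ring. }
  assert (0 < 2 * (r2 * r3)) by (pose proof (Rmult_lt_0_compat r2 r3 r2_pos r3_pos); lra).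
  apply Rmult_integral in center_x as [|center_x]; [lra|].
  apply Rmult_integral in center_y as [|center_y]; [lra|].
  assert (r1 ^ 2 = 0) by (rewrite <- on1; nra).
  nra.
Qed.

Section ListSums.
Context {A : Type}.

Lemma list_sum_map_add (f g : A -> nat) (l : list A) :
  list_sum (map (fun x => f x + g x)%nat l) = (list_sum (map f l) + list_sum (map g l))%nat.
Proof. induction l as [|x l IH]; simpl; lia. Qed.

Lemma list_sum_map_indicator (f : A -> bool) (l : list A) :
  list_sum (map (fun x => if f x then 1 else 0)%nat l) = length (filter f l).
Proof. induction l as [|x l IH]; simpl; [|destruct (f x)]; simpl; lia. Qed.

Lemma list_sum_map_lower (f : A -> nat) (k : nat) (l : list A) :
  (forall x, In x l -> k <= f x)%nat -> (k * length l <= list_sum (map f l))%nat.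
Proof.
  induction l as [|x l IH]; simpl; intros bound; [lia|].
  specialize (IH (fun y y_in => bound y (or_intror y_in))).
  specialize (bound x (or_introl eq_refl)). lia.
Qed.

Lemma list_sum_map_upper (f : A -> nat) (k : nat) (l : list A) :
  (forall x, In x l -> f x <= k)%nat -> (list_sum (map f l) <= k * length l)%nat.
Proof.
  induction l as [|x l IH]; simpl; intros bound; [lia|].
  specialize (IH (fun y y_in => bound y (or_intror y_in))).
  specialize (bound x (or_introl eq_refl)). lia.
Qed.

End ListSums.

Lemma incidences_double_count {A B : Type} (inc : A -> B -> bool) (la : list A) (lb : list B) :
  list_sum (map (fun a => length (filter (inc a) lb)) la) =
  list_sum (map (fun b => length (filter (fun a => inc a b) la)) lb).
Proof.
  induction la as [|a la IH]; simpl.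
  - induction lb; simpl; auto.
  - rewrite IH, <- list_sum_map_indicator, <- list_sum_map_add.
    f_equal; apply map_ext; intros b; simpl.
    destruct (inc a b); reflexivity.
Qed.

Lemma two_le_length_of_distinct {A} (l : list A) (x y : A) :
  In x l -> In y l -> x <> y -> (2 <= length l)%nat.
Proof.
  intros x_in y_in x_ne_y.
  apply (NoDup_incl_length (l := [x; y])).
  - constructor; [intros [e | []]; auto | constructor; [intros [] | constructor]].
  - intros z [<- | [<- | []]]; assumption.
Qed.

Lemma length_le_2_of_no_three_distinct {A} (l : list A) :
  NoDup l ->
  (forall x y z, In x l -> In y l -> In z l -> x <> y -> x <> z -> y <> z -> False) ->
  (length l <= 2)%nat.
Proof.
  intros nodup no_three.
  destruct l as [|x [|y [|z l]]]; simpl; try lia.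
  exfalso.
  apply NoDup_cons_iff in nodup as [x_notin nodup].
  apply NoDup_cons_iff in nodup as [y_notin _].
  apply (no_three x y z); simpl; auto;
    intros <-; simpl in *; tauto.
Qed.

Definition on_boundaryb (d : disk) (p : point) : bool :=
  if Req_EM_T (sqdist p (fst d)) (snd d ^ 2) then true else false.

Lemma on_boundaryb_spec (d : disk) (p : point) : on_boundaryb d p = true <-> on_boundary d p.
Proof. unfold on_boundaryb, on_boundary. destruct Req_EM_T; split; congruence. Qed.

Lemma boundary_points_ge_2 (P : list point) (D : list disk) (d : disk) :
  admissible_family P D -> In d D -> (2 <= length (filter (on_boundaryb d) P))%nat.
Proof.
  intros (_ & disks & _) d_in.
  destruct (disks d d_in) as (_ & p & q & p_in & q_in & p_ne_q & on_p & on_q).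
  apply (two_le_length_of_distinct _ p q); [| | exact p_ne_q];
    apply filter_In; split; try apply on_boundaryb_spec; assumption.
Qed.

Lemma boundary_disks_le_2 (P : list point) (D : list disk) (p : point) :
  admissible_family P D -> (length (filter (fun d => on_boundaryb d p) D) <= 2)%nat.
Proof.
  intros (nodup & disks & disjoint).
  apply length_le_2_of_no_three_distinct; [now apply NoDup_filter|].
  intros d1 d2 d3 in1 in2 in3 ne12 ne13 ne23.
  apply filter_In in in1 as [in1 on1%on_boundaryb_spec].
  apply filter_In in in2 as [in2 on2%on_boundaryb_spec].
  apply filter_In in in3 as [in3 on3%on_boundaryb_spec].
  apply (no_three_disks_through_point d1 d2 d3 p); try (apply disks; assumption);
    try assumption; intros z; apply disjoint; assumption.
Qed.

Theorem admissible_family_length_le (P : list point) (D : list disk) :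
  admissible_family P D -> (length D <= length P)%nat.
Proof.
  intros adm.
  pose proof (list_sum_map_lower _ 2 D (fun d d_in => boundary_points_ge_2 P D d adm d_in)) as lower.
  pose proof (list_sum_map_upper _ 2 P (fun p _ => boundary_disks_le_2 P D p adm)) as upper.
  rewrite incidences_double_count in lower.
  lia.
Qed.

Definition separated (d1 d2 : disk) : Prop :=
  0 < snd d1 /\ 0 < snd d2 /\ (snd d1 + snd d2) ^ 2 <= sqdist (fst d1) (fst d2).

Lemma separated_sym (d1 d2 : disk) : separated d1 d2 -> separated d2 d1.
Proof. unfold separated, sqdist. intros (r1_pos & r2_pos & far). repeat split; lra. Qed.

Lemma separated_irrefl (d : disk) : ~ separated d d.
Proof.
  unfold separated, sqdist. intros (r_pos & _ & far).
  assert (0 < (snd d + snd d) ^ 2) by (apply pow_lt; lra). lra.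
Qed.

Lemma separated_interiors_disjoint (d1 d2 : disk) : separated d1 d2 -> interiors_disjoint d1 d2.
Proof.
  destruct d1 as [[x1 y1] r1], d2 as [[x2 y2] r2].
  unfold separated, interiors_disjoint, in_interior, sqdist; cbn [fst snd].
  intros (r1_pos & r2_pos & far) [zx zy] [in1 in2]; cbn [fst snd] in *.
  set (ux := zx - x1) in *. set (uy := zy - y1) in *.
  set (wx := x2 - zx). set (wy := y2 - zy).
  assert (in2' : wx ^ 2 + wy ^ 2 < r2 ^ 2) by (unfold wx, wy; nra).
  assert (cauchy_schwarz : (ux * wx + uy * wy) ^ 2 <= (ux ^ 2 + uy ^ 2) * (wx ^ 2 + wy ^ 2))
    by (pose proof (pow2_ge_0 (ux * wy - uy * wx)); nra).
  assert (dot_lt : ux * wx + uy * wy < r1 * r2).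
  { assert (0 < r1 * r2) by (apply Rmult_lt_0_compat; lra).
    assert ((ux ^ 2 + uy ^ 2) * (wx ^ 2 + wy ^ 2) < (r1 * r2) ^ 2).
    { rewrite Rpow_mult_distr.
      apply Rle_lt_trans with ((ux ^ 2 + uy ^ 2) * r2 ^ 2).
      - apply Rmult_le_compat_l; nra.
      - apply Rmult_lt_compat_r; [apply pow_lt|]; lra. }
    nra. }
  replace ((x1 - x2) ^ 2 + (y1 - y2) ^ 2)
    with ((ux ^ 2 + uy ^ 2) + (wx ^ 2 + wy ^ 2) + 2 * (ux * wx + uy * wy)) in far
    by (unfold ux, uy, wx, wy; ring).
  nra.
Qed.

Definition NoDup_pairwise {A} (Rel : A -> A -> Prop) (l : list A) : Prop :=
  NoDup l /\ forall x y, In x l -> In y l -> x <> y -> Rel x y.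

Section NoDupPairwise.
Context {A : Type} (Rel : A -> A -> Prop).
Hypothesis Rel_sym : forall x y, Rel x y -> Rel y x.
Hypothesis Rel_irrefl : forall x, ~ Rel x x.

Lemma NoDup_pairwise_nil : NoDup_pairwise Rel [].
Proof. split; [constructor | intros x y []]. Qed.

Lemma NoDup_pairwise_cons (x : A) (l : list A) :
  (forall y, In y l -> Rel x y) -> NoDup_pairwise Rel l -> NoDup_pairwise Rel (x :: l).
Proof.
  intros head [nodup tail]. split.
  - constructor; [|exact nodup]. intros x_in. apply (Rel_irrefl x), head, x_in.
  - intros y z [<- | y_in] [<- | z_in] y_ne_z; [congruence | auto | apply Rel_sym; auto | auto].
Qed.

Lemma NoDup_pairwise_app (l1 l2 : list A) :
  (forall x y, In x l1 -> In y l2 -> Rel x y) ->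
  NoDup_pairwise Rel l1 -> NoDup_pairwise Rel l2 -> NoDup_pairwise Rel (l1 ++ l2).
Proof.
  intros cross [nodup1 pw1] [nodup2 pw2]. split.
  - apply NoDup_app; [exact nodup1 | exact nodup2 |].
    intros x in1 in2. apply (Rel_irrefl x), (cross x x in1 in2).
  - intros x y [in1 | in2]%in_app_iff [in1' | in2']%in_app_iff x_ne_y; auto.
Qed.

Lemma NoDup_pairwise_map_seq (f : nat -> A) (start len : nat) :
  (forall i j, i <> j -> Rel (f i) (f j)) -> NoDup_pairwise Rel (map f (seq start len)).
Proof.
  intros f_rel. split.
  - apply NoDup_map_NoDup_ForallPairs; [|apply seq_NoDup].
    intros i j _ _ fij. destruct (Nat.eq_dec i j) as [|i_ne_j]; [assumption|].
    exfalso. apply (Rel_irrefl (f i)). rewrite fij at 2. now apply f_rel.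
  - intros x y (i & <- & _)%in_map_iff (j & <- & _)%in_map_iff fi_ne_fj.
    apply f_rel. congruence.
Qed.

End NoDupPairwise.

Definition top_disk (k : nat) : disk := ((2 * INR k, 0), 1).
Definition bottom_disk (k : nat) : disk := ((2 * INR k, -2), 1).
(* The caps have radius 2/3 and centres at distance 5/3 = 1 + 2/3 from the centres of the
   end disks of both rows; they touch those disks 3/5 of the way from the disk centre. *)
Definition right_cap (a : nat) : disk := ((2 * INR a + 4/3, -1), 2/3).
Definition left_cap : disk := ((-4/3, -1), 2/3).

Definition top_contact (k : nat) : point := (2 * INR k + 1, 0).
Definition bottom_contact (k : nat) : point := (2 * INR k + 1, -2).
Definition right_cap_top (a : nat) : point := (2 * INR a + 4/5, -3/5).
Definition right_cap_bottom (a : nat) : point := (2 * INR a + 4/5, -7/5).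
Definition left_cap_top : point := (-4/5, -3/5).
Definition left_cap_bottom : point := (-4/5, -7/5).
Definition rows_contact : point := (0, -1).

Definition config_disks (a : nat) (left_capped : bool) : list disk :=
  map top_disk (seq 0 (S a)) ++ map bottom_disk (seq 0 (S a)) ++
  right_cap a :: (if left_capped then [left_cap] else []).

Definition config_points (a : nat) (left_capped : bool) : list point :=
  map top_contact (seq 0 a) ++ map bottom_contact (seq 0 a) ++
  right_cap_top a :: right_cap_bottom a ::
  (if left_capped then [left_cap_top; left_cap_bottom] else [rows_contact]).

Lemma sqr_INR_sub_ge_1 (i j : nat) : i <> j -> 1 <= (INR i - INR j) ^ 2.
Proof.
  intros i_ne_j. apply Nat.lt_gt_cases in i_ne_j as [lt | lt];
    apply le_INR in lt; rewrite S_INR in lt; nra.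
Qed.

Ltac prove_separated :=
  unfold separated, top_disk, bottom_disk, right_cap, left_cap, sqdist; cbn [fst snd];
  split; [lra | split; [lra | nra]].

Lemma separated_top_top (i j : nat) : i <> j -> separated (top_disk i) (top_disk j).
Proof. intros i_ne_j. pose proof (sqr_INR_sub_ge_1 i j i_ne_j). prove_separated. Qed.

Lemma separated_bottom_bottom (i j : nat) : i <> j -> separated (bottom_disk i) (bottom_disk j).
Proof. intros i_ne_j. pose proof (sqr_INR_sub_ge_1 i j i_ne_j). prove_separated. Qed.

Lemma separated_top_bottom (i j : nat) : separated (top_disk i) (bottom_disk j).
Proof. pose proof (pow2_ge_0 (2 * INR i - 2 * INR j)). prove_separated. Qed.

Lemma separated_top_right_cap (i a : nat) : (i <= a)%nat -> separated (top_disk i) (right_cap a).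
Proof. intros le%le_INR. prove_separated. Qed.

Lemma separated_bottom_right_cap (i a : nat) : (i <= a)%nat -> separated (bottom_disk i) (right_cap a).
Proof. intros le%le_INR. prove_separated. Qed.

Lemma separated_top_left_cap (i : nat) : separated (top_disk i) left_cap.
Proof. pose proof (pos_INR i). prove_separated. Qed.

Lemma separated_bottom_left_cap (i : nat) : separated (bottom_disk i) left_cap.
Proof. pose proof (pos_INR i). prove_separated. Qed.

Lemma separated_right_cap_left_cap (a : nat) : separated (right_cap a) left_cap.
Proof. pose proof (pos_INR a). prove_separated. Qed.

Lemma config_disks_separated (a : nat) (left_capped : bool) :
  NoDup_pairwise separated (config_disks a left_capped).
Proof.
  pose proof separated_sym as sym; pose proof separated_irrefl as irrefl.
  assert (right_end : NoDup_pairwise separated (right_cap a :: (if left_capped then [left_cap] else []))).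
  { apply NoDup_pairwise_cons; auto.
    - intros d d_in; destruct left_capped; [|contradiction].
      destruct d_in as [<- | []]; apply separated_right_cap_left_cap.
    - destruct left_capped; repeat apply NoDup_pairwise_cons; auto; try (intros ? []);
        apply NoDup_pairwise_nil. }
  unfold config_disks.
  apply NoDup_pairwise_app; auto.
  - intros d1 d2 (i & <- & i_in%in_seq)%in_map_iff d2_in.
    apply in_app_iff in d2_in as [(j & <- & _)%in_map_iff | [<- | d2_in]].
    + apply separated_top_bottom.
    + apply separated_top_right_cap; lia.
    + destruct left_capped; [|contradiction].
      destruct d2_in as [<- | []]; apply separated_top_left_cap.
  - apply NoDup_pairwise_map_seq; [exact irrefl | exact separated_top_top].
  - apply NoDup_pairwise_app; auto.
    + intros d1 d2 (i & <- & i_in%in_seq)%in_map_iff [<- | d2_in].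
      * apply separated_bottom_right_cap; lia.
      * destruct left_capped; [|contradiction].
        destruct d2_in as [<- | []]; apply separated_bottom_left_cap.
    + apply NoDup_pairwise_map_seq; [exact irrefl | exact separated_bottom_bottom].
Qed.

Ltac distinct_points :=
  unfold top_contact, bottom_contact, right_cap_top, right_cap_bottom,
    left_cap_top, left_cap_bottom, rows_contact;
  let E := fresh in intros E; injection E; intros; lra.

Lemma config_points_NoDup (a : nat) (left_capped : bool) : NoDup (config_points a left_capped).
Proof.
  assert (sym : forall p q : point, p <> q -> q <> p) by auto.
  assert (irrefl : forall p : point, ~ p <> p) by auto.
  assert (contact_inj : forall (f : nat -> point) i j,
             (forall k, fst (f k) = 2 * INR k + 1) -> i <> j -> f i <> f j).
  { intros f i j f_fst i_ne_j f_eq. apply i_ne_j, INR_eq.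
    apply (f_equal fst) in f_eq. rewrite !f_fst in f_eq. lra. }
  pose proof (pos_INR a).
  enough (NoDup_pairwise (fun p q : point => p <> q) (config_points a left_capped)) as [nodup _]
    by exact nodup.
  apply NoDup_pairwise_app; auto.
  - intros p q (i & <- & _)%in_map_iff q_in.
    apply in_app_iff in q_in as [(j & <- & _)%in_map_iff | [<- | [<- | q_in]]];
      try distinct_points.
    destruct left_capped; repeat destruct q_in as [<- | q_in]; try contradiction; distinct_points.
  - apply NoDup_pairwise_map_seq; [exact irrefl | intros i j; now apply contact_inj].
  - apply NoDup_pairwise_app; auto.
    + intros p q (i & <- & _)%in_map_iff [<- | [<- | q_in]]; try distinct_points.
      destruct left_capped; repeat destruct q_in as [<- | q_in]; try contradiction; distinct_points.
    + apply NoDup_pairwise_map_seq; [exact irrefl | intros i j; now apply contact_inj].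
    + destruct left_capped; repeat apply NoDup_pairwise_cons; try apply NoDup_pairwise_nil; auto;
        intros q q_in; repeat destruct q_in as [<- | q_in]; try contradiction; distinct_points.
Qed.

Definition carries_two_points (P : list point) (d : disk) : Prop :=
  exists p q, In p P /\ In q P /\ p <> q /\ on_boundary d p /\ on_boundary d q.

Lemma carries_two_points_of_split (P : list point) (d : disk) (s : R) :
  (exists p, In p P /\ on_boundary d p /\ fst p <= s) ->
  (exists q, In q P /\ on_boundary d q /\ s < fst q) -> carries_two_points P d.
Proof.
  intros (p & p_in & on_p & p_left) (q & q_in & on_q & q_right).
  exists p, q; repeat split; try assumption.
  intros <-; lra.
Qed.

Ltac in_config :=
  unfold config_points; rewrite !in_app_iff; simpl;
  first [ left; apply in_map, in_seq; lia
        | right; left; apply in_map, in_seq; lia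
        | right; right; tauto ].

Ltac unfold_config :=
  unfold on_boundary, sqdist, top_disk, bottom_disk, right_cap, left_cap,
    top_contact, bottom_contact, right_cap_top, right_cap_bottom,
    left_cap_top, left_cap_bottom, rows_contact;
  cbn [fst snd]; rewrite ?S_INR, ?INR_0.

Ltac contact_witness p :=
  exists p; split; [in_config | split; unfold_config; [field | lra]].

Lemma top_disk_carries_two_points (a k : nat) (left_capped : bool) :
  (k <= a)%nat -> carries_two_points (config_points a left_capped) (top_disk k).
Proof.
  intros k_le. pose proof (pos_INR k).
  apply (carries_two_points_of_split _ _ (2 * INR k)).
  - destruct k as [|k].
    + destruct left_capped; [contact_witness left_cap_top | contact_witness rows_contact].
    + contact_witness (top_contact k).
  - destruct (Nat.eq_dec k a) as [-> | k_ne_a].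
    + contact_witness (right_cap_top a).
    + contact_witness (top_contact k).
Qed.

Lemma bottom_disk_carries_two_points (a k : nat) (left_capped : bool) :
  (k <= a)%nat -> carries_two_points (config_points a left_capped) (bottom_disk k).
Proof.
  intros k_le. pose proof (pos_INR k).
  apply (carries_two_points_of_split _ _ (2 * INR k)).
  - destruct k as [|k].
    + destruct left_capped; [contact_witness left_cap_bottom | contact_witness rows_contact].
    + contact_witness (bottom_contact k).
  - destruct (Nat.eq_dec k a) as [-> | k_ne_a].
    + contact_witness (right_cap_bottom a).
    + contact_witness (bottom_contact k).
Qed.

Lemma right_cap_carries_two_points (a : nat) (left_capped : bool) :
  carries_two_points (config_points a left_capped) (right_cap a).
Proof.
  exists (right_cap_top a), (right_cap_bottom a).
  repeat split; try in_config; try distinct_points; unfold_config; field.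
Qed.

Lemma left_cap_carries_two_points (a : nat) :
  carries_two_points (config_points a true) left_cap.
Proof.
  exists left_cap_top, left_cap_bottom.
  repeat split; try in_config; try distinct_points; unfold_config; field.
Qed.

Definition config_size (a : nat) (left_capped : bool) : nat :=
  2 * a + (if left_capped then 4 else 3).

Lemma config_points_length (a : nat) (left_capped : bool) :
  length (config_points a left_capped) = config_size a left_capped.
Proof.
  unfold config_points, config_size. rewrite !length_app, !length_map, !length_seq.
  destruct left_capped; simpl; lia.
Qed.

Lemma config_disks_length (a : nat) (left_capped : bool) :
  length (config_disks a left_capped) = config_size a left_capped.
Proof.
  unfold config_disks, config_size. rewrite !length_app, !length_map, !length_seq.
  destruct left_capped; simpl; lia.
Qed.

Lemma config_size_surjective (n : nat) : (3 <= n)%nat -> exists a left_capped, config_size a left_capped = n.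
Proof.
  intros n_ge_3. unfold config_size.
  destruct (Nat.Even_or_Odd n) as [[m ->] | [m ->]].
  - exists (m - 2)%nat, true. lia.
  - exists (m - 1)%nat, false. lia.
Qed.

Lemma config_admissible (a : nat) (left_capped : bool) :
  admissible_family (config_points a left_capped) (config_disks a left_capped).
Proof.
  destruct (config_disks_separated a left_capped) as [nodup separated_pairs].
  split; [exact nodup | split].
  - intros d d_in. unfold config_disks in d_in. rewrite !in_app_iff in d_in.
    destruct d_in as [(k & <- & k_in%in_seq)%in_map_iff | [(k & <- & k_in%in_seq)%in_map_iff | [<- | d_in]]].
    + split; [unfold top_disk; simpl; lra|]. apply top_disk_carries_two_points; lia.
    + split; [unfold bottom_disk; simpl; lra|]. apply bottom_disk_carries_two_points; lia.
    + split; [unfold right_cap; simpl; lra|]. apply right_cap_carries_two_points.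
    + destruct left_capped; [|contradiction]. destruct d_in as [<- | []].
      split; [unfold left_cap; simpl; lra|]. apply left_cap_carries_two_points.
  - intros d1 d2 d1_in d2_in d1_ne_d2.
    apply separated_interiors_disjoint, separated_pairs; assumption.
Qed.

Theorem mainTheorem12 :
  (forall (P : list point) (D : list disk),
      NoDup P -> admissible_family P D -> (length D <= length P)%nat) /\
  (forall n : nat, (3 <= n)%nat ->
      exists (P : list point) (D : list disk),
        NoDup P /\ length P = n /\ admissible_family P D /\ length D = n).
Proof.
  split.
  - intros P D _. apply admissible_family_length_le.
  - intros n n_ge_3.
    destruct (config_size_surjective n n_ge_3) as (a & left_capped & <-).
    exists (config_points a left_capped), (config_disks a left_capped).
    split; [apply config_points_NoDup|].
    split; [apply config_points_length|].
    split; [apply config_admissible | apply config_disks_length].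
Qed.
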